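(* Let $p\ge1$ and for $0<\alpha\le2$ let $Q(\alpha,p)$ be the infimum of all $q$ with the property: for every $\varepsilon>0$ there is $C_\varepsilon>0$ such that $$\int_{B(0,R)}|\mathcal T^\lambda f|^qH(x)\,dx\le C_\varepsilon A_\alpha(H)R^\varepsilon\|f\|_{L^p}^q$$ for all $\lambda\ge1$, $1\le R\le\lambda$, all $f\in L^p$ supported in $(0,1)$ and all $\alpha$-dimensional weights $H$. Then for $0<\beta<\alpha\le2$, $$\frac{Q(\alpha,p)}{\alpha}\le\frac{Q(\beta,p)}{\beta}.$$
   Context: Let $\phi(x,\xi)$, $x\in\mathbb{R}^2$, $\xi\in\mathbb{R}$, be a real smooth function on a neighborhood of $\overline{B(0,1)}\times[0,1]$ satisfying the Carleson–Sjölin condition: the $2\times2$ matrix with rows $\partial_\xi\nabla_x\phi(x,\xi)$ and $\partial_\xi^2\nabla_x\phi(x,\xi)$ has rank 2 everywhere there. Let $a\in C_c^\infty(B(0,1)\times(0,1))$. For $\lambda\ge1$ put $\phi^\lambda(x,\xi)=\lambda\phi(x/\lambda,\xi)$, $a^\lambda(x,\xi)=a(x/\lambda,\xi)$, and for $f$ supported in $(0,1)$, $\mathcal T^\lambda f(x)=\int e^{i\phi^\lambda(x,\xi)}a^\lambda(x,\xi)f(\xi)\,d\xi$. A measurable $H:\mathbb{R}^2\to[0,1]$ is an $\alpha$-dimensional weight if $A_\alpha(H):=\inf\{C\ge0:\int_{B(x_0,r)}H\,dx\le Cr^\alpha\text{ for all }x_0\in\mathbb{R}^2,\ r\ge1\}<\infty$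 (and $H\not\equiv0$). *)

From HB Require Import structures.
From mathcomp Require Import all_boot all_order all_algebra.
From mathcomp Require Import all_classical all_reals all_analysis.
Set Implicit Arguments. Unset Strict Implicit. Unset Printing Implicit Defensive.
Import Order.TTheory GRing.Theory Num.Theory.
Import numFieldNormedType.Exports.
Local Open Scope classical_set_scope.
Local Open Scope ring_scope.

Section Defs.
Variable R : realType.

(** Functions of (x1, x2, xi) in R^2 x R are curried as R -> R -> R -> R;
    for differentiability we view them on the normed space 'rV[R]_3. *)
Definition lift3 (g : R -> R -> R -> R) : 'rV[R]_3 -> R :=
  fun v => g (v ord0 ord0) (v ord0 (@Ordinal 3 1 isT)) (v ord0 (@Ordinal 3 2 isT)).

Fixpoint iterD (vs : seq 'rV[R]_3) (g : 'rV[R]_3 -> R) : 'rV[R]_3 -> R :=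
  match vs with
  | [::] => g
  | v :: vs' => 'D_v (iterD vs' g)
  end.

Definition smooth_on (U : set 'rV[R]_3) (g : 'rV[R]_3 -> R) : Prop :=
  open U /\
  forall vs : seq 'rV[R]_3,
    (forall x, U x -> {for x, continuous (iterD vs g)}) /\
    (forall v x, U x -> derivable (iterD vs g) x v).

(** standard basis vector e_i of R^3 (coordinates x1, x2, xi) *)
Definition e3 (i : 'I_3) : 'rV[R]_3 := delta_mx ord0 i.

(** the 2x2 matrix with rows  d_xi grad_x phi  and  d_xi^2 grad_x phi *)
Definition CSmatrix (phi : R -> R -> R -> R) (v : 'rV[R]_3) : 'M[R]_2 :=
  \matrix_(i < 2, j < 2)
     iterD (nseq i.+1 (e3 (@Ordinal 3 2 isT)) ++ [:: e3 (widen_ord (isT : 2 <= 3)%N j)])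
           (lift3 phi) v.

Definition Kset : set 'rV[R]_3 :=
  [set v | (v ord0 ord0) ^+ 2 + (v ord0 (@Ordinal 3 1 isT)) ^+ 2 <= 1 /\
           0 <= v ord0 (@Ordinal 3 2 isT) <= 1].

Definition Oset : set 'rV[R]_3 :=
  [set v | (v ord0 ord0) ^+ 2 + (v ord0 (@Ordinal 3 1 isT)) ^+ 2 < 1 /\
           0 < v ord0 (@Ordinal 3 2 isT) < 1].

Definition CS_phase (phi : R -> R -> R -> R) : Prop :=
  exists U : set 'rV[R]_3,
    Kset `<=` U /\ smooth_on U (lift3 phi) /\
    forall v, U v -> \rank (CSmatrix phi v) = 2%N.

(** complex amplitude a = ar + i ai in C_c^infinity(B(0,1) x (0,1)) *)
Definition amplitude (ar ai : R -> R -> R -> R) : Prop :=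
  smooth_on setT (lift3 ar) /\ smooth_on setT (lift3 ai) /\
  let S := closure [set v | lift3 ar v != 0 \/ lift3 ai v != 0] in
  compact S /\ S `<=` Oset.

(** real and imaginary parts of T^lambda f (x), f = fr + i fi, with
    phi^lambda(x,xi) = lambda phi(x/lambda, xi), a^lambda(x,xi) = a(x/lambda, xi) *)
Definition Tre (phi ar ai : R -> R -> R -> R) (lam : R) (fr fi : R -> R)
  (x : R * R) : R :=
  Rintegral lebesgue_measure setT (fun xi =>
    let ph := lam * phi (x.1 / lam) (x.2 / lam) xi in
    let gr := ar (x.1 / lam) (x.2 / lam) xi * fr xi - ai (x.1 / lam) (x.2 / lam) xi * fi xi in
    let gi := ar (x.1 / lam) (x.2 / lam) xi * fi xi + ai (x.1 / lam) (x.2 / lam) xi * fr xi in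
    cos ph * gr - sin ph * gi).

Definition Tim (phi ar ai : R -> R -> R -> R) (lam : R) (fr fi : R -> R)
  (x : R * R) : R :=
  Rintegral lebesgue_measure setT (fun xi =>
    let ph := lam * phi (x.1 / lam) (x.2 / lam) xi in
    let gr := ar (x.1 / lam) (x.2 / lam) xi * fr xi - ai (x.1 / lam) (x.2 / lam) xi * fi xi in
    let gi := ar (x.1 / lam) (x.2 / lam) xi * fi xi + ai (x.1 / lam) (x.2 / lam) xi * fr xi in
    sin ph * gr + cos ph * gi).

Definition Tabs phi ar ai lam fr fi (x : R * R) : R :=
  Num.sqrt (Tre phi ar ai lam fr fi x ^+ 2 + Tim phi ar ai lam fr fi x ^+ 2).

Definition cabs (fr fi : R -> R) (xi : R) : R := Num.sqrt (fr xi ^+ 2 + fi xi ^+ 2).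

Definition in_Lp (p : R) (fr fi : R -> R) : Prop :=
  measurable_fun setT fr /\ measurable_fun setT fi /\
  (\int[lebesgue_measure]_xi (powR (cabs fr fi xi) p)%:E < +oo)%E.

Definition Lpnorm (p : R) (fr fi : R -> R) : R :=
  powR (fine (\int[lebesgue_measure]_xi (powR (cabs fr fi xi) p)%:E)%E) p^-1.

Definition leb2 := (@lebesgue_measure R \x @lebesgue_measure R)%E.

Definition ball2 (x0 : R * R) (r : R) : set (R * R) :=
  [set x | (x.1 - x0.1) ^+ 2 + (x.2 - x0.2) ^+ 2 < r ^+ 2].

Definition A_alpha (alpha : R) (H : R * R -> R) : \bar R :=
  ereal_inf [set C%:E | C in [set C : R | 0 <= C /\
     forall x0 r, 1 <= r ->
       (\int[leb2]_(x in ball2 x0 r) (H x)%:E <= (C * powR r alpha)%:E)%E]].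

Definition is_weight (alpha : R) (H : R * R -> R) : Prop :=
  measurable_fun setT H /\ (forall x, 0 <= H x <= 1) /\
  (A_alpha alpha H < +oo)%E /\ exists x, H x != 0.

Definition good_exponent (phi ar ai : R -> R -> R -> R) (alpha p q : R) : Prop :=
  forall eps : R, 0 < eps -> exists Ce : R, 0 < Ce /\
    forall (lam Rad : R) (fr fi : R -> R) (H : R * R -> R),
      1 <= lam -> 1 <= Rad <= lam ->
      in_Lp p fr fi ->
      (forall xi, ~ (0 < xi < 1) -> fr xi = 0 /\ fi xi = 0) ->
      is_weight alpha H ->
      (\int[leb2]_(x in ball2 (0%R, 0%R) Rad)
          (powR (Tabs phi ar ai lam fr fi x) q * H x)%:E
       <= Ce%:E * A_alpha alpha H * (powR Rad eps * powR (Lpnorm p fr fi) q)%:E)%E.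

Definition Qexp (phi ar ai : R -> R -> R -> R) (alpha p : R) : \bar R :=
  ereal_inf [set q%:E | q in [set q : R | 0 < q /\ good_exponent phi ar ai alpha p q]].

End Defs.

From HB Require Import structures.
From mathcomp Require Import all_boot all_order all_algebra.
From mathcomp Require Import all_classical all_reals all_analysis.
From mathcomp Require Import measurable_realfun ring.
Import Order.TTheory GRing.Theory Num.Theory.
Import numFieldNormedType.Exports.
Import HBNNSimple.
Local Open Scope classical_set_scope.
Local Open Scope ring_scope.
Set Implicit Arguments. Unset Strict Implicit. Unset Printing Implicit Defensive.

(** If q is admissible for the dimension beta, then q * alpha / beta is
    admissible for alpha.  Put th = beta / alpha and let H be an
    alpha-dimensional weight.  Bound |T^lambda f|^(q/th) H on the ball from
    below by a bounded simple function h <= c.  Then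
    G = h^(1-th) H^th / c^(1-th) is a beta-dimensional weight and, by Hoelder,
    A_beta(G) <= (int h)^(1-th) A_alpha(H)^th / c^(1-th); moreover
    h / c^(1-th) <= |T^lambda f|^q G pointwise.  The beta-estimate applied to G
    bounds int h by C^(1/th) A_alpha(H) R^eps ||f||^(q/th) once the factor
    (int h)^(1-th) is absorbed. *)

Section integral_complements.
Context d (T : measurableType d) (R : realType) (mu : {measure set T -> \bar R}).

Lemma ge0_le_integral_nonmeasurable (D : set T) (f g : T -> \bar R) :
  (forall x, D x -> (0 <= f x)%E) -> (forall x, D x -> (f x <= g x)%E) ->
  (\int[mu]_(x in D) f x <= \int[mu]_(x in D) g x)%E.
Proof.
move=> f0 fg.
have g0 x : D x -> (0 <= g x)%E by move=> Dx; exact: le_trans (f0 x Dx) (fg x Dx).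
rewrite !ge0_integralE //.
apply: ge_ereal_sup => _ [h hf <-]; apply: le_ereal_sup_tmp.
exists (sintegral mu h) => //; exists h => // x.
apply: le_trans (hf x) _; rewrite /patch; case: ifP => // /set_mem xD.
exact: fg.
Qed.

Lemma nnsfun_ub (h : {nnsfun T >-> R}) : exists2 c : R, 0 < c & forall x, h x <= c.
Proof.
have [M [_ HM]] := simple_bounded h.
exists (`|M| + 1); first by rewrite ltr_wpDl.
move=> x; apply: le_trans (ler_norm _) (HM _ _ x I).
by rewrite (le_lt_trans (ler_norm _)) // ltrDl.
Qed.

Lemma integral_bounded_fin_num (A : set T) (h : T -> R) (c : R) :
  measurable A -> (mu A < +oo)%E -> measurable_fun setT h ->
  (forall x, 0 <= h x <= c) -> (forall x, ~ A x -> h x = 0) ->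
  (\int[mu]_x (h x)%:E)%E \is a fin_num.
Proof.
move=> mA muA mh h0c hA.
have h0 x : 0 <= h x by have /andP[] := h0c x.
have c0 : 0 <= c by have /andP[_ hc] := h0c point; exact: le_trans hc.
rewrite ge0_fin_numE; last by apply: integral_ge0 => x _; rewrite lee_fin.
apply: (@le_lt_trans _ _ (\int[mu]_x (c%:E * (\1_A x)%:E))%E).
  apply: ge0_le_integral => //.
  - by move=> x _; rewrite lee_fin.
  - exact/measurable_EFinP.
  - by apply/measurable_EFinP; apply: measurable_funM => //; exact: measurable_indic.
  move=> x _; rewrite -EFinM lee_fin indicE.
  case: (boolP (x \in A)) => [_|/negP xA]; first by rewrite mulr1; have /andP[] := h0c x.
  by rewrite mulr0 hA // => /mem_set.
rewrite ge0_integralZl_EFin //; last by apply/measurable_EFinP; exact: measurable_indic.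
by rewrite integral_indic // setIT lte_mul_pinfty // ge0_fin_numE.
Qed.

Lemma hoelder_interpolation (A : set T) (h H : T -> R) (th P D : R) :
  0 < th < 1 -> measurable A -> measurable_fun setT h -> measurable_fun setT H ->
  (forall x, 0 <= h x) -> (forall x, 0 <= H x) ->
  (\int[mu]_x (h x)%:E = P%:E)%E -> (\int[mu]_(x in A) (H x)%:E <= D%:E)%E -> 0 <= D ->
  (\int[mu]_(x in A) (powR (h x) (1 - th) * powR (H x) th)%:E
     <= (powR P (1 - th) * powR D th)%:E)%E.
Proof.
move=> /andP[th0 th1] mA mh mH h0 H0 hP HD D0.
have th'0 : 0 < 1 - th by rewrite subr_gt0.
have mf : measurable_fun setT (fun x => powR (h x) (1 - th)).
  exact: measurableT_comp (measurable_powR _) mh.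
have mg : measurable_fun setT (fun x => powR (H x) th * \1_A x).
  apply: measurable_funM; last exact: measurable_indic.
  exact: measurableT_comp (measurable_powR _) mH.
have := @hoelder _ _ _ mu _ _ (1 - th)^-1 th^-1 mf mg.
rewrite !invr_gt0 th'0 th0 !invrK subrK => /(_ isT isT erefl).
rewrite Lnorm1 !unlock !invrK => hol.
have -> : (\int[mu]_(x in A) (powR (h x) (1 - th) * powR (H x) th)%:E =
    \int[mu]_x `|(powR (h x) (1 - th) * (powR (H x) th * \1_A x))%:E|)%E.
  rewrite integral_mkcond; apply: eq_integral => x _ /=.
  rewrite /patch indicE; case: (x \in A) => /=.
    by rewrite mulr1 ger0_norm // mulr_ge0 ?powR_ge0.
  by rewrite !mulr0 normr0.
apply: (le_trans hol); rewrite EFinM.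
apply: lee_pmul; [exact: poweR_ge0|exact: poweR_ge0| |].
  rewrite -poweR_EFin -hP; under eq_integral => x _.
    rewrite /= ger0_norm ?powR_ge0 // -powRrM mulfV ?gt_eqF // powRr1 //.
  over.
  by [].
rewrite -poweR_EFin; apply: gt0_ler_poweR; first exact: ltW.
- by rewrite in_itv /= leey andbT; apply: integral_ge0 => x _; rewrite lee_fin powR_ge0.
- by rewrite in_itv /= lee_fin D0 leey.
apply: le_trans HD; rewrite [in X in (_ <= X)%E]integral_mkcond le_eqVlt.
apply/predU1P; left; apply: eq_integral => x _ /=.
rewrite ger0_norm ?mulr_ge0 ?powR_ge0 // /patch indicE; case: (x \in A) => /=.
  by rewrite mulr1 -powRrM mulfV ?gt_eqF // powRr1.
by rewrite mulr0 powR0 // invr_neq0 // gt_eqF.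
Qed.

End integral_complements.

Section weights.
Variable R : realType.
Local Notation T := (R * R)%type.
Local Notation mu := (@leb2 R).

Lemma measurable_ball2 (x0 : T) (r : R) : measurable (ball2 x0 r).
Proof.
have mf : measurable_fun setT (fun x : T => (x.1 - x0.1) ^+ 2 + (x.2 - x0.2) ^+ 2).
  apply: measurable_funD.
    exact: measurable_funX (measurable_funB measurable_fst (measurable_cst _)).
  exact: measurable_funX (measurable_funB measurable_snd (measurable_cst _)).
have := mf measurableT _ (measurable_itv `]-oo, r ^+ 2[).
rewrite setTI; congr measurable; apply/seteqP; split => x /=;
  by rewrite /ball2 /= in_itv /=.
Qed.

Lemma leb2_ball2_lty (r : R) : (mu (ball2 (0%R, 0%R) r) < +oo)%E.
Proof.
have sub : ball2 (0%R, 0%R) r `<=` `[- `|r|, `|r|] `*` `[- `|r|, `|r|].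
  move=> [a b]; rewrite /ball2 /= !subr0 => h.
  have ha : a ^+ 2 <= `|r| ^+ 2.
    by rewrite real_normK ?num_real //; apply: le_trans (ltW h); rewrite lerDl sqr_ge0.
  have hb : b ^+ 2 <= `|r| ^+ 2.
    by rewrite real_normK ?num_real //; apply: le_trans (ltW h); rewrite lerDr sqr_ge0.
  split; rewrite /= in_itv /= -ler_norml -(ler_pXn2r (isT : (0 < 2)%N)) ?nnegrE //;
    by rewrite real_normK ?num_real.
set I := `[- `|r|, `|r|]%classic in sub *.
have mI : measurable I by exact: measurable_itv.
apply: (@le_lt_trans _ _ (mu (I `*` I))).
  by apply: le_measure => //; rewrite inE; [exact: measurable_ball2|exact: measurableX].
have lebI : (lebesgue_measure I < +oo)%E.
  by rewrite lebesgue_measure_itv /=; case: ifP => _; rewrite ?ltry.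
by rewrite /leb2 product_measure1E // lte_mul_pinfty // ge0_fin_numE.
Qed.

Definition growth_bound (alpha C : R) (H : T -> R) : Prop :=
  forall x0 r, 1 <= r ->
    (\int[mu]_(x in ball2 x0 r) (H x)%:E <= (C * powR r alpha)%:E)%E.

Lemma A_alpha_ge0 (alpha : R) (H : T -> R) : (0 <= A_alpha alpha H)%E.
Proof. by apply: le_ereal_inf_tmp => _ [C [C0 _] <-]; rewrite lee_fin. Qed.

Lemma A_alpha_le (alpha C : R) (H : T -> R) :
  0 <= C -> growth_bound alpha C H -> (A_alpha alpha H <= C%:E)%E.
Proof. by move=> C0 HC; apply: ereal_inf_lbound; exists C. Qed.

Lemma le_mul_A_alpha (alpha W : R) (H : T -> R) (X : \bar R) :
  0 <= W -> (A_alpha alpha H < +oo)%E ->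
  (forall C, 0 <= C -> growth_bound alpha C H -> (X <= (W * C)%:E)%E) ->
  (X <= W%:E * A_alpha alpha H)%E.
Proof.
move=> W0 Afin XW; have [W00|Wpos] := eqVneq W 0.
  have [_ [C [C0 HC] <-] _] := ereal_inf_lt Afin.
  by have := XW C C0 HC; rewrite W00 mul0r mul0e.
have {}W0 : 0 < W by rewrite lt_neqAle eq_sym Wpos.
rewrite -lee_pdivrMl //; apply: le_ereal_inf_tmp => _ [C [C0 HC] <-].
by rewrite lee_pdivrMl // -EFinM XW.
Qed.

Lemma is_weight_growth_bound (alpha C : R) (H : T -> R) :
  measurable_fun setT H -> (forall x, 0 <= H x <= 1) -> (exists x, H x != 0) ->
  0 <= C -> growth_bound alpha C H -> is_weight alpha H.
Proof.
move=> mH H01 HN0 C0 HC; do 3!split => //.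
exact: le_lt_trans (A_alpha_le C0 HC) (ltry _).
Qed.

End weights.

Section powR_complements.
Variable R : realType.

Lemma powR_mul_complement (a th : R) : 0 <= a -> powR a (1 - th) * powR a th = a.
Proof. by move=> a0; rewrite -powRD ?subrK ?powRr1 // oner_eq0. Qed.

Lemma le_powR_interpolate (h F H q s th : R) : 0 <= th -> s * th = q ->
  0 <= h -> 0 <= F -> 0 <= H -> h <= powR F s * H ->
  h <= powR F q * (powR h (1 - th) * powR H th).
Proof.
move=> th0 <- h0 F0 H0 hle.
rewrite -{1}(powR_mul_complement th h0) mulrCA ler_wpM2l ?powR_ge0 //.
have := @ge0_ler_powR R th th0 h (powR F s * H).
rewrite !nnegrE => /(_ h0 (mulr_ge0 (powR_ge0 _ _) H0) hle).
by rewrite powRM ?powR_ge0 // -powRrM.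
Qed.

Lemma powR_absorb_le (p Ce C K th : R) : 0 < th -> 0 < p ->
  0 <= Ce -> 0 <= C -> 0 <= K ->
  p <= Ce * (powR p (1 - th) * powR C th) * K ->
  p <= powR Ce th^-1 * C * powR K th^-1.
Proof.
move=> th0 p0 Ce0 C0 K0.
rewrite -{1}(powR_mul_complement th (ltW p0)).
rewrite (_ : Ce * _ * K = powR p (1 - th) * (K * (Ce * powR C th))); last by ring.
rewrite ler_pM2l ?powR_gt0 // => hle.
have thi0 : 0 <= th^-1 by rewrite invr_ge0 ltW.
have := @ge0_ler_powR R th^-1 thi0 (powR p th) (K * (Ce * powR C th)).
rewrite !nnegrE powR_ge0 !mulr_ge0 ?powR_ge0 // => /(_ isT isT hle).
rewrite -powRrM mulfV ?gt_eqF // powRr1 ?(ltW p0) // => /le_trans; apply.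
rewrite !powRM ?mulr_ge0 ?powR_ge0 // -powRrM mulfV ?gt_eqF // powRr1 //.
by rewrite mulrC.
Qed.

End powR_complements.

Section interpolated_weight.
Variable R : realType.
Local Notation T := (R * R)%type.
Local Notation mu := (@leb2 R).
Variables (th c : R) (h H : T -> R).
Hypotheses (th01 : 0 < th < 1) (c0 : 0 < c).
Hypotheses (h0c : forall x, 0 <= h x <= c) (H01 : forall x, 0 <= H x <= 1).
Hypotheses (mh : measurable_fun setT h) (mH : measurable_fun setT H).

Definition interp_weight (x : T) : R :=
  powR (h x) (1 - th) * powR (H x) th / powR c (1 - th).

Let h0 x : 0 <= h x. Proof. by have /andP[] := h0c x. Qed.
Let H0 x : 0 <= H x. Proof. by have /andP[] := H01 x. Qed.

Lemma interp_weight_ge0 x : 0 <= interp_weight x.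
Proof. by rewrite !mulr_ge0 ?powR_ge0 // invr_ge0 powR_ge0. Qed.

Lemma interp_weight_le1 x : interp_weight x <= 1.
Proof.
have /andP[th0 th1] := th01.
have /andP[_ hc] := h0c x; have /andP[_ H1] := H01 x.
rewrite ler_pdivrMr ?powR_gt0 // mul1r -[X in _ <= X]mulr1.
apply: ler_pM; rewrite ?powR_ge0 //.
  by apply: ge0_ler_powR; rewrite ?nnegrE ?subr_ge0 ?(ltW th1) ?(ltW c0) ?h0.
apply: (@le_trans _ _ (powR 1 th)); last by rewrite powR1.
by apply: ge0_ler_powR; rewrite ?nnegrE ?(ltW th0) ?H0.
Qed.

Lemma measurable_interp_weight : measurable_fun setT interp_weight.
Proof.
apply: measurable_funM; last exact: measurable_cst.
apply: measurable_funM; exact: measurableT_comp (measurable_powR _) _.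
Qed.

Lemma interp_weight_growth (alpha C P : R) :
  0 <= C -> growth_bound alpha C H -> (\int[mu]_x (h x)%:E = P%:E)%E ->
  growth_bound (th * alpha) (powR P (1 - th) * powR C th / powR c (1 - th))
    interp_weight.
Proof.
move=> C0 HC hP x0 r r1.
have r0 : 0 <= r by exact: le_trans r1.
under eq_integral do rewrite /interp_weight EFinM muleC.
rewrite ge0_integralZl_EFin //; first last.
- by rewrite invr_ge0 powR_ge0.
- apply/measurable_EFinP/measurable_funTS/measurable_funM;
    exact: measurableT_comp (measurable_powR _) _.
- by move=> x _; rewrite lee_fin mulr_ge0 ?powR_ge0.
- exact: measurable_ball2.
rewrite -lee_pdivlMl ?invr_gt0 ?powR_gt0 // invrK -EFinM.
apply: le_trans (hoelder_interpolation (mu := mu) th01 (measurable_ball2 x0 r) mh mH h0 H0 hP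
  (HC x0 r r1) (mulr_ge0 C0 (powR_ge0 _ _))) _.
rewrite lee_fin powRM ?powR_ge0 // -powRrM [alpha * th]mulrC.
by rewrite le_eqVlt; apply/predU1P; left; field; rewrite gt_eqF ?powR_gt0.
Qed.

Lemma le_interp_weight (F q s : R) x : s * th = q -> 0 <= F ->
  h x <= powR F s * H x -> h x / powR c (1 - th) <= powR F q * interp_weight x.
Proof.
move=> sq F0 hle; have /andP[th0 _] := th01.
rewrite /interp_weight mulrA ler_pM2r ?invr_gt0 ?powR_gt0 //.
exact: le_powR_interpolate (ltW th0) sq (h0 x) F0 (H0 x) hle.
Qed.

End interpolated_weight.

Section weighted_bound_transfer.
Variable R : realType.
Local Notation T := (R * R)%type.
Local Notation mu := (@leb2 R).
Variables (alpha beta q Ce K Rad : R) (F : T -> R).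
Hypotheses (beta0 : 0 < beta) (beta_alpha : beta < alpha).
Hypotheses (Ce0 : 0 <= Ce) (K0 : 0 <= K) (F0 : forall x, 0 <= F x).
Let B := ball2 (0%R, 0%R) Rad.
Hypothesis F_beta : forall G, is_weight beta G ->
  (\int[mu]_(x in B) (powR (F x) q * G x)%:E <= Ce%:E * A_alpha beta G * K%:E)%E.
Variables (C : R) (H : T -> R).
Hypotheses (C0 : 0 <= C) (mH : measurable_fun setT H) (H01 : forall x, 0 <= H x <= 1).
Hypothesis HC : growth_bound alpha C H.

Let alpha0 : 0 < alpha. Proof. exact: lt_trans beta_alpha. Qed.
Let th := beta / alpha.
Let th01 : 0 < th < 1.
Proof. by rewrite divr_gt0 //= ltr_pdivrMr // mul1r. Qed.
Let th_inv : th^-1 = alpha / beta. Proof. by rewrite invf_div. Qed.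

Lemma bounded_integral_le (h : T -> R) (c : R) : 0 < c ->
  measurable_fun setT h -> (forall x, 0 <= h x <= c) -> (forall x, ~ B x -> h x = 0) ->
  (forall x, B x -> h x <= powR (F x) (q * (alpha / beta)) * H x) ->
  (\int[mu]_x (h x)%:E <= (powR Ce (alpha / beta) * C * powR K (alpha / beta))%:E)%E.
Proof.
move=> c0 mh h0c hB hF.
have h0 x : 0 <= h x by have /andP[] := h0c x.
have mB : measurable B by exact: measurable_ball2.
have := integral_bounded_fin_num (mu := mu) mB (leb2_ball2_lty Rad) mh h0c hB.
set P := (\int[mu]_x (h x)%:E)%E => Pfin.
have P0 : (0 <= P)%E by apply: integral_ge0 => x _; rewrite lee_fin.
set p := fine P; have Pp : P = p%:E by rewrite fineK.
have p0 : 0 <= p by rewrite fine_ge0.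
have [pz|pnz] := eqVneq p 0; first by rewrite Pp pz lee_fin !mulr_ge0 ?powR_ge0.
have {}p0 : 0 < p by rewrite lt_neqAle eq_sym pnz.
set G := interp_weight th c h H; set c' := powR c (1 - th).
have c'0 : 0 < c' by rewrite powR_gt0.
set C' := powR p (1 - th) * powR C th / c'.
have GC : growth_bound beta C' G.
  by rewrite -[beta](divfK (lt0r_neq0 alpha0)) -/th; exact: interp_weight_growth.
have q_th : q * (alpha / beta) * th = q by rewrite /th; field; rewrite !gt_eqF.
have hG x : B x -> h x / c' <= powR (F x) q * G x.
  by move=> Bx; exact: le_interp_weight q_th (F0 x) (hF x Bx).
have G_neq0 : exists x, G x != 0.
  apply: contrapT => /forallNP G0; suff : P = 0%E by rewrite Pp => -[/eqP]; rewrite gt_eqF.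
  apply: integral0_eq => x _; congr EFin; apply/eqP; rewrite eq_le h0 andbT.
  have [Bx|] := pselect (B x); last by move/hB ->.
  have := hG x Bx; move/negP/negbNE/eqP: (G0 x) => ->.
  by rewrite mulr0 pmulr_lle0 // invr_gt0.
have G01 x : 0 <= G x <= 1 by rewrite interp_weight_ge0 interp_weight_le1.
have C'0 : 0 <= C' by rewrite divr_ge0 ?mulr_ge0 ?powR_ge0 ?(ltW c'0).
have wG : is_weight beta G.
  by apply: is_weight_growth_bound GC => //; exact: measurable_interp_weight.
have low : ((p / c')%:E <= \int[mu]_(x in B) (powR (F x) q * G x)%:E)%E.
  have -> : ((p / c')%:E = \int[mu]_(x in B) (h x / c')%:E)%E.
    have -> : (\int[mu]_(x in B) (h x / c')%:E = \int[mu]_x ((c'^-1)%:E * (h x)%:E))%E.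
      rewrite integral_mkcond; apply: eq_integral => x _; rewrite /patch -EFinM mulrC.
      by case: ifP => // /negP xB; rewrite hB ?mulr0 // => /mem_set.
    rewrite ge0_integralZl_EFin ?invr_ge0 ?(ltW c'0) //.
    - by rewrite -/P Pp -EFinM mulrC.
    - by move=> x _; rewrite lee_fin.
    - exact/measurable_EFinP.
  apply: (ge0_le_integral_nonmeasurable mu) => x Bx; rewrite lee_fin; last exact: hG.
  by rewrite divr_ge0 ?h0 ?(ltW c'0).
have up : ((p / c')%:E <= (Ce * C' * K)%:E)%E.
  apply: (le_trans low); apply: (le_trans (F_beta wG)); rewrite EFinM (EFinM Ce C').
  apply: lee_pmul => //; first by rewrite mule_ge0 ?A_alpha_ge0.
  by apply: lee_pmul; rewrite ?lee_fin ?A_alpha_ge0 //; exact: A_alpha_le C'0 GC.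
rewrite Pp lee_fin -th_inv; apply: powR_absorb_le => //; first by case/andP: th01.
move: up; rewrite lee_fin /C'.
rewrite (_ : Ce * _ * K = Ce * (powR p (1 - th) * powR C th) * K / c'); last by ring.
by rewrite ler_pM2r ?invr_gt0.
Qed.

Lemma weighted_integral_le :
  (\int[mu]_(x in B) (powR (F x) (q * (alpha / beta)) * H x)%:E
     <= (powR Ce (alpha / beta) * C * powR K (alpha / beta))%:E)%E.
Proof.
have H0 x : 0 <= H x by have /andP[] := H01 x.
rewrite integral_mkcond ge0_integralTE; last first.
  by move=> x; rewrite /patch; case: ifP => // _; rewrite lee_fin mulr_ge0 ?powR_ge0.
apply: ge_ereal_sup => _ [h hle <-]; rewrite -integralT_nnsfun.
have [c c0 hc] := nnsfun_ub h.
apply: (bounded_integral_le c0 (measurable_funPT h)).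
- by move=> x; rewrite hc fun_ge0.
- move=> x nB; apply/eqP; rewrite eq_le fun_ge0 andbT.
  by have := hle x; rewrite /patch; case: ifP => [/set_mem //|_]; rewrite lee_fin.
- by move=> x Bx; have := hle x; rewrite /patch mem_set.
Qed.

End weighted_bound_transfer.

Section exponent_scaling.
Variable R : realType.
Variables (phi ar ai : R -> R -> R -> R) (p alpha beta : R).
Hypotheses (beta0 : 0 < beta) (beta_alpha : beta < alpha).

Let alpha0 : 0 < alpha. Proof. exact: lt_trans beta_alpha. Qed.
Let ratio_invK : beta / alpha * (alpha / beta) = 1.
Proof. by rewrite -[alpha / beta]invf_div mulfV // mulf_neq0 ?invr_eq0 ?lt0r_neq0. Qed.

Lemma good_exponent_scale (q : R) : good_exponent phi ar ai beta p q ->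
  good_exponent phi ar ai alpha p (q * (alpha / beta)).
Proof.
move=> gq eps eps0.
have eK (r l : R) : powR (powR r (eps * (beta / alpha)) * powR l q) (alpha / beta) =
    powR r eps * powR l (q * (alpha / beta)).
  by rewrite powRM ?powR_ge0 // -(powRrM r) -(powRrM l) -mulrA ratio_invK mulr1.
have [Ce [Ce0 hCe]] := gq (eps * (beta / alpha)) (mulr_gt0 eps0 (divr_gt0 beta0 alpha0)).
exists (powR Ce (alpha / beta)); split; first exact: powR_gt0.
move=> lam Rad fr fi H lam1 Rad_lam hL hsupp [mH [H01 [Afin _]]].
set K := powR Rad (eps * (beta / alpha)) * powR (Lpnorm p fr fi) q.
have K0 : 0 <= K by rewrite mulr_ge0 ?powR_ge0.
have F0 x : 0 <= Tabs phi ar ai lam fr fi x by exact: sqrtr_ge0.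
rewrite muleAC -EFinM; apply: le_mul_A_alpha => // [|C C0 HC].
  by rewrite !mulr_ge0 ?powR_ge0.
have F_beta G := hCe lam Rad fr fi G lam1 Rad_lam hL hsupp.
have := weighted_integral_le beta0 beta_alpha (ltW Ce0) K0 F0 F_beta C0 mH H01 HC.
by rewrite eK mulrAC.
Qed.

Lemma Qexp_scale :
  (Qexp phi ar ai alpha p * (beta / alpha)%:E <= Qexp phi ar ai beta p)%E.
Proof.
apply: le_ereal_inf_tmp => _ [q [q0 gq] <-].
have Qq : (Qexp phi ar ai alpha p <= (q * (alpha / beta))%:E)%E.
  apply: ereal_inf_lbound; exists (q * (alpha / beta)) => //.
  by split; [rewrite mulr_gt0 ?divr_gt0 | exact: good_exponent_scale].
apply: le_trans (lee_wpmul2r _ Qq) _; first by rewrite lee_fin divr_ge0 ?ltW.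
by rewrite -EFinM -mulrA [_ * (_ / _)]mulrC ratio_invK mulr1.
Qed.

End exponent_scaling.

Theorem mainTheorem8 (R : realType) (phi ar ai : R -> R -> R -> R) (p alpha beta : R) :
  CS_phase phi -> amplitude ar ai ->
  1 <= p -> 0 < beta -> beta < alpha -> alpha <= 2 ->
  (Qexp phi ar ai alpha p * (alpha^-1)%:E <= Qexp phi ar ai beta p * (beta^-1)%:E)%E.
Proof.
move=> _ _ _ beta0 beta_alpha _.
have alpha0 : 0 < alpha by exact: lt_trans beta_alpha.
move: (Qexp_scale phi ar ai p beta0 beta_alpha).
move: (Qexp phi ar ai alpha p) (Qexp phi ar ai beta p) => Qa Qb scale.
rewrite (_ : alpha^-1 = beta / alpha * beta^-1); last first.
  by rewrite mulrAC mulfV ?mul1r // lt0r_neq0.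
rewrite EFinM muleA; apply: lee_wpmul2r scale.
by rewrite lee_fin invr_ge0 ltW.
Qed.
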